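(* Let $G=(V,E)$ be a finite directed graph and let $R(G)$ denote its root. Then $R(G)$ is the smallest subset $S\subseteq V$ (with respect to inclusion) satisfying both of the following conditions: (i) for every $v\in V$ there exist $w\in S$ and a walk from $w$ to $v$ in $G$; (ii) if $v\in S$, $w\in V$ and $(w,v)\in E$, then $w\in S$.
   Context: A directed graph (digraph) is a pair $G=(V,E)$ with $V$ a finite set and $E\subseteq V\times V$; loops $(v,v)$ are allowed. A walk from $v_0$ to $v_n$ is a sequence $(v_0,\dots,v_n)$ of vertices, $n\ge 0$, with $(v_{i-1},v_i)\in E$ for all $i\in\{1,\dots,n\}$; write $v\leadsto w$ if there is a walk from $v$ to $w$. Define $v\sim w$ iff $v\leadsto w$ and $w\leadsto v$ (strongly connected components). The quotient graph $G^{SCC}=(V/_\sim,E^{SCC})$ has edges $(P,Q)$ for $P\ne Q$ such that $(p,q)\in E$ for some $p\in P$, $q\in Q$. The source of a digraph $H=(W,F)$ is $\mathrm{source}(H)=\{v\in W: \text{no edge of }F\text{ ends in }v\}$. The root of $G$ is $R(G):=\bigcup \mathrm{source}(G^{SCC})\subseteq V$, i.e. the union of those strongly connected components that have no incoming edge from another component. *)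

(* A finite digraph is (V : finType, E : rel V); loops allowed. *)
From mathcomp Require Import all_boot.
Set Implicit Arguments. Unset Strict Implicit. Unset Printing Implicit Defensive.

Section Root.
Variables (V : finType) (E : rel V).

Definition walk_rel (v w : V) : bool := connect E v w.

Definition scc (v : V) : {set V} := [set w | walk_rel v w && walk_rel w v].

Definition sccs : {set {set V}} := [set scc v | v in V].

Definition scc_edge (P Q : {set V}) : bool :=
  (P != Q) && [exists p in P, exists q in Q, E p q].

Definition scc_sources : {set {set V}} :=
  [set Q in sccs | ~~ [exists P in sccs, scc_edge P Q]].

Definition digraph_root : {set V} := \bigcup_(Q in scc_sources) Q.

Definition root_cond (S : {set V}) : Prop :=
  (forall v : V, exists2 w, w \in S & walk_rel w v) /\
  (forall v w : V, v \in S -> E w v -> w \in S).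
End Root.

From mathcomp Require Import all_boot.

(* A vertex r lies in R(G) exactly when it is initial: every vertex with a
   walk to r is also reachable from r.  Every vertex v is reached from an
   initial vertex, namely an ancestor of v with the fewest ancestors, and
   initial vertices are closed under taking predecessors; this gives (i) and
   (ii).  Conversely, a set S with (ii) contains every ancestor of its
   members, and by (i) every initial r has an ancestor in S, which r reaches
   back. *)

Section DigraphRoot.
Variables (V : finType) (E : rel V).

Lemma connect_stable (a : pred V) :
  (forall x y, E x y -> a x -> a y) -> forall x y, connect E x y -> a x -> a y.
Proof.
move=> aE x y /connectP[p]; elim: p x => [|z p IHp] x /=; first by move=> _ ->.
by case/andP=> Exz pz y_last ax; apply: IHp pz y_last (aE x z Exz ax).
Qed.

Lemma mem_scc v x : (x \in scc E v) = connect E v x && connect E x v.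
Proof. by rewrite inE. Qed.

Lemma scc_id v : v \in scc E v.
Proof. by rewrite mem_scc connect0. Qed.

Lemma scc_eq u v : connect E u v -> connect E v u -> scc E u = scc E v.
Proof.
move=> uv vu; apply/setP=> x; rewrite !mem_scc.
apply/andP/andP=> [[ux xu]|[vx xv]]; split.
- exact: connect_trans vu ux.
- exact: connect_trans xu uv.
- exact: connect_trans uv vx.
- exact: connect_trans xv vu.
Qed.

Lemma scc_in_sccs v : scc E v \in sccs E.
Proof. exact: imset_f. Qed.

Definition initial (r : V) : Prop := forall w, connect E w r -> connect E r w.

Lemma source_scc_initial v r :
  scc E v \in scc_sources E -> r \in scc E v -> initial r.
Proof.
rewrite inE scc_in_sccs /= => no_in_edge r_v w wr.
have out_stable x y : E x y -> x \notin scc E v -> y \notin scc E v.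
  move=> Exy xNv; apply: contraNN no_in_edge => yv.
  apply/existsP; exists (scc E x); rewrite scc_in_sccs /scc_edge /=.
  apply/andP; split; first by apply: contraNneq xNv => <-; apply: scc_id.
  by apply/existsP; exists x; rewrite scc_id; apply/existsP; exists y; rewrite yv.
have wv : w \in scc E v.
  apply: contraLR r_v => wNv.
  exact: (connect_stable (fun x => x \notin scc E v) out_stable w r wr wNv).
move: wv r_v; rewrite !mem_scc => /andP[vw _] /andP[_ rv].
exact: connect_trans rv vw.
Qed.

Lemma initial_scc_source r : initial r -> scc E r \in scc_sources E.
Proof.
move=> r_init; rewrite inE scc_in_sccs /=; apply/existsP=> -[_ /andP[/imsetP[u _ ->]]].
case/andP=> /eqP neq_ur /existsP[p /andP[up /existsP[q /andP[qr Epq]]]].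
apply: neq_ur; move: up qr; rewrite !mem_scc => /andP[up pu] /andP[rq qr].
have pr : connect E p r by apply: connect_trans (connect1 Epq) qr.
apply: scc_eq; first exact: connect_trans up pr.
exact: connect_trans (r_init p pr) pu.
Qed.

Lemma rootP r : reflect (initial r) (r \in digraph_root E).
Proof.
apply: (iffP bigcupP) => [[Q Q_src rQ]|r_init].
  have /imsetP[v _ Qv] : Q \in sccs E by move: Q_src; rewrite inE => /andP[].
  by rewrite Qv in Q_src rQ; apply: source_scc_initial Q_src rQ.
by exists (scc E r); [apply: initial_scc_source | apply: scc_id].
Qed.

Lemma initial_connect r w : initial r -> connect E w r -> initial w.
Proof.
move=> r_init wr x xw; have xr := connect_trans xw wr.
exact: connect_trans wr (r_init x xr).
Qed.

Lemma exists_initial_ancestor v : exists2 w, initial w & connect E w v.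
Proof.
pose ancestors w := [set x | connect E x w].
have [w wv w_min] :=
  arg_minnP (P := connect E^~ v) (fun w => #|ancestors w|) (connect0 E v).
exists w => // x xw.
have sub : ancestors x \subset ancestors w.
  by apply/subsetP=> y; rewrite !inE => yx; apply: connect_trans yx xw.
have /eqP eq_anc : ancestors x == ancestors w.
  by rewrite eqEcard sub w_min //; apply: connect_trans xw wv.
have : w \in ancestors w by rewrite inE connect0.
by rewrite -eq_anc inE.
Qed.

Lemma root_cond_root : root_cond E (digraph_root E).
Proof.
split=> [v | v w /rootP v_init Ewv].
  by have [w /rootP] := exists_initial_ancestor v; exists w.
by apply/rootP; apply: initial_connect v_init (connect1 Ewv).
Qed.

Lemma root_cond_sub S : root_cond E S -> digraph_root E \subset S.
Proof.
case=> S_reach S_pred; apply/subsetP=> r /rootP r_init.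
have [w wS wr] := S_reach r.
have notS_stable x y : E x y -> x \notin S -> y \notin S.
  by move=> Exy; apply: contraNN => /S_pred; apply.
apply: contraLR wS; exact: connect_stable notS_stable r w (r_init w wr).
Qed.

End DigraphRoot.

Theorem theorem2p4 (V : finType) (E : rel V) :
  root_cond E (digraph_root E) /\
  (forall S : {set V}, root_cond E S -> digraph_root E \subset S).
Proof. by split; [apply: root_cond_root | apply: root_cond_sub]. Qed.
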